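(* Let $s,r \ge 2$ and $q \ge 1$ be integers. If $R(s,q) \geq r$, then $Q(s,r) \leq q$.
   Context: The product dimension of a finite graph $G$ is the minimum possible number $d$ of proper vertex colorings of $G$ such that for every pair $u,v$ of distinct non-adjacent vertices there is at least one of the colorings in which $u$ and $v$ receive the same color. $K_s(r)$ denotes the graph consisting of $r$ pairwise vertex-disjoint copies of the complete graph $K_s$, and $Q(s,r)$ is the product dimension of $K_s(r)$. Let $Z_s$ be the ring of integers modulo $s$. For $A \subseteq Z_s$, a vector $v=(v_1,\dots,v_q)\in Z_s^q$ is $A$-covering if for every $a \in A$ there is $1 \le i \le q$ with $v_i = a$. A family $\mathcal{F} \subseteq Z_s^q$ is $A$-covering if for every ordered pair of distinct vectors $u,v \in \mathcal{F}$ the difference $u-v$ is $A$-covering; it is covering if it is $Z_s$-covering. $R(s,q)$ denotes the maximum possible cardinality of a covering family in $Z_s^q$. *)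

From mathcomp Require Import all_boot all_order all_algebra.
From mathcomp Require Import boolp.
Set Implicit Arguments. Unset Strict Implicit. Unset Printing Implicit Defensive.
Import GRing.Theory.
Local Open Scope ring_scope.

Definition proper_coloring (V : finType) (adj : rel V) (c : V -> nat) : Prop :=
  forall u v : V, adj u v -> c u <> c v.

Definition pd_ok (V : finType) (adj : rel V) (d : nat) : Prop :=
  exists cs : 'I_d -> V -> nat,
    (forall i, proper_coloring adj (cs i)) /\
    (forall u v : V, u <> v -> ~~ adj u v -> exists i : 'I_d, cs i u = cs i v).

(* The minimum such d (such a d always exists for a finite graph; the
   fallback value 0 in the other branch is never used). *)
Definition product_dim (V : finType) (adj : rel V) : nat :=
  match pselect (exists d, pd_ok adj d) with
  | left H =>
      @ex_minn (fun d => `[< pd_ok adj d >])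
        (let: ex_intro d Hd := H in ex_intro _ d (asboolT Hd))
  | right _ => 0%N
  end.

(* K_s(r): r disjoint copies of K_s; vertex (i, j) = vertex j of copy i. *)
Definition Ksr_adj (s r : nat) : rel ('I_r * 'I_s) :=
  fun x y => (x.1 == y.1) && (x.2 != y.2).

Definition Q (s r : nat) : nat := product_dim (@Ksr_adj s r).

Definition A_covering_vec (s q : nat) (A : {set 'Z_s}) (v : {ffun 'I_q -> 'Z_s}) : bool :=
  [forall a in A, [exists i : 'I_q, v i == a]].

Definition A_covering_family (s q : nat) (A : {set 'Z_s})
    (F : {set {ffun 'I_q -> 'Z_s}}) : bool :=
  [forall u in F, [forall v in F,
     (u != v) ==> A_covering_vec A [ffun i => u i - v i]]].

Definition covering_family (s q : nat) (F : {set {ffun 'I_q -> 'Z_s}}) : bool :=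
  A_covering_family [set: 'Z_s] F.

Definition R (s q : nat) : nat :=
  \max_(F : {set {ffun 'I_q -> 'Z_s}} | covering_family F) #|F|.

From mathcomp Require Import all_boot.
From mathcomp Require Import all_algebra boolp.
Import GRing.Theory.
Local Open Scope ring_scope.

(* Take r vectors c_1, ..., c_r of a covering family in Z_s^q and colour
   vertex j of the k-th copy of K_s, in the i-th colouring, by c_k(i) + j.
   Inside one copy the colours are the distinct translates of c_k(i), so each
   colouring is proper; for vertices j, j' of distinct copies k, k', the
   difference c_k - c_k' takes the value j' - j at some coordinate i, and
   there the two vertices receive the same colour. *)

Lemma product_dim_le (V : finType) (adj : rel V) (d : nat) :
  pd_ok adj d -> (product_dim adj <= d)%N.
Proof.
rewrite /product_dim => ok_d; case: pselect => [ex_ok|] //.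
by case: ex_minnP => m _ /(_ d); apply; apply/asboolP.
Qed.

Lemma R_attained (s q : nat) :
  exists2 F : {set {ffun 'I_q -> 'Z_s}}, covering_family F & #|F| = R s q.
Proof.
have cov0 : covering_family (set0 : {set {ffun 'I_q -> 'Z_s}}).
  by apply/forallP => u; rewrite inE.
have [|F covF maxF] := @eq_bigmax_cond _ (@covering_family s q) (fun F => #|F|).
  by apply/card_gt0P; exists set0.
by exists F; rewrite // /R maxF.
Qed.

Lemma covering_familyP (s q : nat) (F : {set {ffun 'I_q -> 'Z_s}}) u v :
  covering_family F -> u \in F -> v \in F -> u != v ->
  forall a : 'Z_s, exists i : 'I_q, u i - v i = a.
Proof.
move=> /forallP/(_ u)/implyP covF Fu Fv neq_uv a.
move: covF => /(_ Fu)/forallP/(_ v)/implyP/(_ Fv)/implyP/(_ neq_uv).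
move=> /forallP/(_ a)/implyP/(_ (in_setT a))/existsP[i /eqP <-].
by exists i; rewrite ffunE.
Qed.

Lemma Ksr_pd_ok_of_code (n r q : nat) (code : 'I_r -> {ffun 'I_q -> 'Z_n.+2}) :
  (forall k k', k != k' -> forall a, exists i, code k i - code k' i = a) ->
  pd_ok (@Ksr_adj n.+2 r) q.
Proof.
move=> code_cover.
pose colour i (x : 'I_r * 'I_n.+2) := nat_of_ord (code x.1 i + (x.2 : 'Z_n.+2)).
exists colour; split.
- move=> i [k j] [k' j'] /andP[/= /eqP <- neq_jj'] /ord_inj/addrI/= eq_jj'.
  by rewrite eq_jj' eqxx in neq_jj'.
- move=> [k j] [k' j']; case: (eqVneq k k') => [<- | neq_kk' _ _].
    rewrite /Ksr_adj /= eqxx negbK => neq_jj' /eqP eq_jj'.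
    by rewrite eq_jj' in neq_jj'.
  have [i code_ij] := code_cover k k' neq_kk' ((j' : 'Z_n.+2) - j).
  exists i; congr nat_of_ord => /=.
  by rewrite -[j'](subrK j) -code_ij addrA [code k' i + _]addrC subrK.
Qed.

Theorem proposition1p2 (s r q : nat) :
  (2 <= s)%N -> (2 <= r)%N -> (1 <= q)%N ->
  (r <= R s q)%N -> (Q s r <= q)%N.
Proof.
case: s => [|[|n]] // _ _ _; have [F covF <-] := R_attained n.+2 q => r_le_F.
pose code (k : 'I_r) := enum_val (widen_ord r_le_F k).
apply/product_dim_le/(@Ksr_pd_ok_of_code n r q code) => k k' neq_kk'.
have neq_code : code k != code k'.
  by apply: contra_neq neq_kk' => /enum_val_inj[/ord_inj].
exact: covering_familyP covF (enum_valP _) (enum_valP _) neq_code.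
Qed.
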